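(* For all integers $n\ge1$ and $k\ge1$, the number of $k$-quasi-Stirling permutations of size $n$ is $$|\overline{\mathcal{Q}}^k_n|=\frac{(kn)!}{((k-1)n+1)!}=n!\,C_{n,k},\qquad\text{where } C_{n,k}=\frac{1}{(k-1)n+1}\binom{kn}{n}.$$
   Context: A $k$-quasi-Stirling permutation of size $n$ is a permutation $\pi$ of the multiset $\{1^k,2^k,\dots,n^k\}$ (each of $1,\dots,n$ appearing exactly $k$ times) that avoids the patterns $1212$ and $2121$, i.e. there are no indices $i<j<m<\ell$ with $\pi_i=\pi_m\neq\pi_j=\pi_\ell$. $\overline{\mathcal{Q}}^k_n$ denotes the set of these permutations. *)

From mathcomp Require Import all_boot.
Set Implicit Arguments. Unset Strict Implicit. Unset Printing Implicit Defensive.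

(* A word over the alphabet 'I_n (letter i : 'I_n stands for the value i+1
   in {1,..,n}); it is a permutation of the multiset {1^k,...,n^k} when every
   letter occurs exactly k times. *)
Definition is_multiset_perm (n k : nat) (w : seq 'I_n) : bool :=
  [forall a : 'I_n, count_mem a w == k].

Definition has_1212_2121 (n : nat) (w : seq 'I_n) : bool :=
  [exists i : 'I_(size w), exists j : 'I_(size w),
   exists m : 'I_(size w), exists l : 'I_(size w),
     [&& (i < j)%N, (j < m)%N, (m < l)%N,
         tnth (in_tuple w) i == tnth (in_tuple w) m,
         tnth (in_tuple w) j == tnth (in_tuple w) l &
         tnth (in_tuple w) i != tnth (in_tuple w) j]].

Definition quasi_stirling (n k : nat) : {set (k * n).-tuple 'I_n} :=
  [set w : (k * n).-tuple 'I_n | is_multiset_perm k w && ~~ has_1212_2121 w].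

Definition Cnk (n k : nat) : nat := 'C(k * n, n) %/ ((k - 1) * n + 1).

From mathcomp Require Import all_boot zify.
Set Implicit Arguments. Unset Strict Implicit. Unset Printing Implicit Defensive.

(* A word in which every letter occurs k times and which avoids 1212 and 2121,
   if it starts with a, factors uniquely as a B_1 a B_2 ... a B_k where the B_i
   are such words again, on pairwise disjoint alphabets not containing a.
   Hence the number F(m, j) of j-tuples of such words partitioning an m-letter
   alphabet satisfies F(m, j+1) = F(m, j) + m F(m-1, j+k): the first word is
   either empty, or starts with one of the m letters a and its k blocks join the
   remaining j words.  This recursion is solved by
   F(m, j) ((k-1)m + j)! = j (km + j - 1)!, and the permutations counted by
   the theorem are the 1-tuples on the alphabet {1, ..., n}.
   Divisibility of binom(kn, n) by d = (k-1)n + 1 follows from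
   n binom(kn, n) = d binom(kn, n-1) and gcd(n, d) = 1. *)

Section Subsequences.
Variable T : eqType.
Implicit Types (x y : T) (s t u v : seq T).

Lemma subseq_cat_split t u v : subseq t (u ++ v) ->
  exists t1 t2, [/\ t = t1 ++ t2, subseq t1 u & subseq t2 v].
Proof.
elim: u t => [|x u IHu] t /=; first by exists [::], t.
case: t => [|y t]; first by exists [::], [::]; rewrite !sub0seq.
case: eqP => [->|_] /IHu [t1 [t2 [-> sub1 sub2]]].
  by exists (x :: t1), t2; rewrite /= eqxx.
by exists t1, t2; split=> //; apply: subseq_trans sub1 (subseq_cons _ _).
Qed.

Lemma subseq_cons_neq x y t s :
  x != y -> subseq (x :: t) (y :: s) = subseq (x :: t) s.
Proof. by move=> /negbTE /= ->. Qed.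

Lemma subseq_nth_drop x0 s i p t : p <= i < size s ->
  subseq t (drop i.+1 s) -> subseq (nth x0 s i :: t) (drop p s).
Proof.
case/andP=> le_pi lt_is sub_t.
have lt_i : i - p < size (drop p s) by rewrite size_drop; lia.
rewrite -(subnKC le_pi) -nth_drop.
rewrite -{2}(cat_take_drop (i - p) (drop p s)) (drop_nth x0 lt_i).
apply: subseq_trans (suffix_subseq _ _); rewrite /= eqxx drop_drop.
by rewrite addSn subnK.
Qed.

Lemma subseq_drop_nth x0 x t s p : subseq (x :: t) (drop p s) ->
  exists i, [/\ p <= i < size s, nth x0 s i = x & subseq t (drop i.+1 s)].
Proof.
elim: s p => [|y s IHs] [|p] //=; last first.
  by case/IHs=> i [? ? ?]; exists i.+1.
case: eqP => [<- ?|_]; first by exists 0; rewrite drop0.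
by rewrite -{1}(drop0 s) => /IHs [i [? ? ?]]; exists i.+1.
Qed.

End Subsequences.

Section Words.
Variable T : finType.
Implicit Types (a x y z : T) (w : seq T).

Definition abab_free w : bool :=
  [forall x, forall y, (x != y) ==> ~~ subseq [:: x; y; x; y] w].

Lemma abab_freeP w :
  reflect (forall x y, x != y -> ~ subseq [:: x; y; x; y] w) (abab_free w).
Proof.
apply: (iffP forallP) => [free x y neq_xy sub|free x].
  by move: (forallP (free x) y); rewrite neq_xy sub.
by apply/forallP => y; apply/implyP => /free/negP.
Qed.

Lemma abab_free_subseq w1 w2 : subseq w1 w2 -> abab_free w2 -> abab_free w1.
Proof.
move=> sub12 /abab_freeP free2; apply/abab_freeP => x y neq_xy sub1.
exact: free2 neq_xy (subseq_trans sub1 sub12).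
Qed.

Lemma abab_free_nil : abab_free [::].
Proof. exact/abab_freeP. Qed.

Lemma abab_free_cons a w : a \notin w -> abab_free w -> abab_free (a :: w).
Proof.
move=> aw /abab_freeP free; apply/abab_freeP => x y neq_xy.
have [-> /=|neq_xa] := eqVneq x a; last by rewrite subseq_cons_neq //; apply: free.
by rewrite eqxx => /mem_subseq/(_ a); rewrite !inE eqxx orbT (negbTE aw) => /(_ isT).
Qed.

Implicit Types (B : seq T) (Bs : seq (seq T)).

Definition interleave a Bs := flatten [seq a :: B | B <- Bs].

Lemma interleave_cons a B Bs : interleave a (B :: Bs) = a :: B ++ interleave a Bs.
Proof. by []. Qed.

Lemma mem_interleave a Bs : {subset interleave a Bs <= a :: flatten Bs}.
Proof.
elim: Bs => //= B Bs IHBs z; rewrite inE mem_cat => /or3P[/eqP-> | zB | /IHBs].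
- exact: mem_head.
- by rewrite inE mem_cat zB orbT.
- by rewrite !inE mem_cat => /orP[->|->]; rewrite ?orbT.
Qed.

Lemma count_interleave a Bs z :
  count_mem z (interleave a Bs) = (a == z) * size Bs + count_mem z (flatten Bs).
Proof.
elim: Bs => [|B Bs IHBs]; first by rewrite muln0.
rewrite interleave_cons /= !count_cat IHBs mulnS -!addnA.
by congr (_ + _); rewrite addnCA.
Qed.

Lemma index_interleave a Bs : index a (interleave a Bs) = 0.
Proof. by case: Bs => //= B Bs; rewrite eqxx. Qed.

Lemma interleave_inj a :
  {in [pred Bs | a \notin flatten Bs] &, injective (interleave a)}.
Proof.
elim=> [|B1 Bs1 IHBs] [|B2 Bs2] //; rewrite !inE /= !mem_cat !negb_or.
case/andP=> aB1 aBs1 /andP[aB2 aBs2] [eq12].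
have := congr1 (fun s => (take (index a s) s, drop (index a s) s)) eq12.
rewrite /= !index_cat (negbTE aB1) (negbTE aB2) !index_interleave !addn0.
by rewrite !take_size_cat ?drop_size_cat // => -[-> /IHBs ->].
Qed.

Lemma subseq_cons_interleave a Bs B : B \in Bs -> subseq (a :: B) (interleave a Bs).
Proof.
elim: Bs => // B' Bs IHBs; rewrite inE interleave_cons -cat_cons.
case/predU1P=> [->|/IHBs sub]; first exact: prefix_subseq.
exact: subseq_trans sub (suffix_subseq _ _).
Qed.

Lemma interleave_decomp a w :
  exists B0 Bs, w = B0 ++ interleave a Bs /\ all (fun B => a \notin B) (B0 :: Bs).
Proof.
elim: w => [|x w [B0 [Bs [-> notin_a]]]]; first by exists [::], [::].
have [->|neq_xa] := eqVneq x a; first by exists [::], (B0 :: Bs).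
by exists (x :: B0), Bs; move: notin_a; rewrite /= inE negb_or eq_sym neq_xa.
Qed.

Fixpoint disjoint_blocks Bs := if Bs is B :: Bs' then
  all (fun z => z \notin flatten Bs') B && disjoint_blocks Bs' else true.

Lemma count_flatten_disjoint Bs B z : disjoint_blocks Bs -> B \in Bs -> z \in B ->
  count_mem z (flatten Bs) = count_mem z B.
Proof.
elim: Bs => // B' Bs IHBs /= /andP[disj dBs]; rewrite inE count_cat.
case/predU1P=> [-> zB|BBs zB]; first by rewrite (count_memPn (allP disj z zB)) addn0.
have zBs : z \in flatten Bs by apply/flattenP; exists B.
have zB' : z \notin B' by apply: contraL zBs; apply: (allP disj).
by rewrite (count_memPn zB') IHBs.
Qed.

Lemma subseq_interleave_split a B Bs t : all (fun z => z \notin flatten Bs) B ->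
  subseq t (interleave a (B :: Bs)) -> exists t1 t2,
  [/\ t = t1 ++ t2, subseq t1 (a :: B), subseq t2 (interleave a Bs) &
      forall z, z \in t1 -> z \in t2 -> z = a].
Proof.
move=> /allP disj; rewrite interleave_cons -cat_cons.
case/subseq_cat_split=> t1 [t2 [-> sub1 sub2]]; exists t1, t2; split=> // z z1 z2.
move: (mem_subseq sub1 z1) (mem_interleave (mem_subseq sub2 z2)).
by rewrite !inE => /predU1P[//|/disj/negbTE->]; rewrite orbF => /eqP.
Qed.

Lemma interleave_no_bab a Bs y : a \notin flatten Bs -> disjoint_blocks Bs ->
  y != a -> ~ subseq [:: y; a; y] (interleave a Bs).
Proof.
move=> + + neq_ya; elim: Bs => // B Bs IHBs aBBs /andP[disj dBs].
have /norP[aB aBs] : ~~ ((a \in B) || (a \in flatten Bs)) by rewrite -mem_cat.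
case/(subseq_interleave_split disj)=> t1 [t2 [e sub1 sub2 common]].
move: e sub1 sub2 common; case: t1 => [|x1 [|x2 [|x3 [|x4 t1]]]] e sub1 sub2 common.
- by apply: (IHBs aBs dBs); rewrite e.
- case: e common => <- <- common.
  have eya : y = a by apply: common; rewrite !inE eqxx ?orbT.
  by rewrite eya eqxx in neq_ya.
- case: e common => <- <- <- common.
  have eya : y = a by apply: common; rewrite !inE eqxx ?orbT.
  by rewrite eya eqxx in neq_ya.
- case: e sub1 => <- <- <- _ sub1; rewrite subseq_cons_neq // in sub1.
  by case/negP: aB; apply: (mem_subseq sub1); rewrite !inE eqxx orbT.
- by case: e.
Qed.

Lemma abab_free_interleave a Bs : a \notin flatten Bs -> disjoint_blocks Bs ->
  all abab_free Bs -> abab_free (interleave a Bs).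
Proof.
elim: Bs => [|B Bs IHBs] aBBs; first by rewrite abab_free_nil.
case/andP=> disj dBs /andP[freeB freeBs].
have /norP[aB aBs] : ~~ ((a \in B) || (a \in flatten Bs)) by rewrite -mem_cat.
have /abab_freeP freeI := IHBs aBs dBs freeBs.
have /abab_freeP freeaB := abab_free_cons aB freeB.
apply/abab_freeP => x y neq_xy.
case/(subseq_interleave_split disj)=> t1 [t2 [e sub1 sub2 common]].
move: e sub1 sub2 common; case: t1 => [|x1 [|x2 [|x3 [|x4 [|x5 t1]]]]] e sub1 sub2 common.
- by apply: freeI neq_xy _; rewrite e.
- case: e sub2 common => <- <- sub2 common.
  have exa : x = a by apply: common; rewrite !inE eqxx ?orbT.
  by subst x; apply: (interleave_no_bab aBs dBs _ sub2); rewrite eq_sym.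
- case: e common => <- <- <- common.
  have exa : x = a by apply: common; rewrite !inE eqxx ?orbT.
  have eya : y = a by apply: common; rewrite !inE eqxx ?orbT.
  by rewrite exa eya eqxx in neq_xy.
- case: e sub1 common => <- <- <- <- sub1 common.
  have eya : y = a by apply: common; rewrite !inE eqxx ?orbT.
  subst y; rewrite subseq_cons_neq // in sub1.
  by case/negP: aB; apply: (mem_subseq sub1); rewrite !inE eqxx orbT.
- by case: e sub1 => <- <- <- <- _ sub1; apply: freeaB neq_xy sub1.
- by case: e.
Qed.

Lemma disjoint_blocks_of_abab_free a Bs : abab_free (interleave a Bs) ->
  all (fun B => a \notin B) Bs -> disjoint_blocks Bs.
Proof.
elim: Bs => // B Bs IHBs free /andP[aB aBs] /=; apply/andP; split; last first.
  apply: IHBs aBs; apply: abab_free_subseq free.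
  by rewrite interleave_cons -cat_cons suffix_subseq.
apply/allP => z zB; apply/negP => /flattenP[B' BBs zB'].
have neq_az : a != z by apply: contraNneq aB => ->.
move/abab_freeP: free => /(_ a z neq_az); apply.
rewrite interleave_cons -cat_cons -[[:: a; z; a; z]]/([:: a; z] ++ [:: a; z]).
apply: cat_subseq; first by rewrite /= eqxx sub1seq.
apply: subseq_trans (subseq_cons_interleave a BBs).
by rewrite /= eqxx sub1seq.
Qed.

End Words.

Lemma has_1212_2121E n (w : seq 'I_n) : has_1212_2121 w = ~~ abab_free w.
Proof.
apply/idP/idP.
  case/existsP=> i /existsP[j /existsP[m /existsP[l]]].
  case/and4P=> lt_ij lt_jm lt_ml /and3P[/eqP eq_im /eqP eq_jl neq_ij].
  apply/negP => /abab_freeP free.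
  move: eq_im eq_jl neq_ij; set x0 := tnth _ i => eq_im eq_jl neq_ij.
  rewrite !(tnth_nth x0) /= in eq_im eq_jl neq_ij.
  have exi : x0 = nth x0 w i := tnth_nth x0 (in_tuple w) i.
  have sub : subseq [:: nth x0 w i; nth x0 w j; nth x0 w m; nth x0 w l] w.
    rewrite -[X in subseq _ X]drop0; apply: subseq_nth_drop; first by rewrite ltn_ord.
    apply: subseq_nth_drop; first by rewrite lt_ij ltn_ord.
    apply: subseq_nth_drop; first by rewrite lt_jm ltn_ord.
    by apply: subseq_nth_drop; rewrite ?lt_ml ?ltn_ord ?sub0seq.
  by apply: free neq_ij _; rewrite -exi -eq_im -eq_jl in sub.
rewrite negb_forall => /existsP[x]; rewrite negb_forall => /existsP[y].
rewrite negb_imply negbK => /andP[neq_xy]; rewrite -[X in subseq _ X]drop0.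
case/(subseq_drop_nth x) => i [/andP[_ lt_i] eq_i].
case/(subseq_drop_nth x) => j [/andP[lt_ij lt_j] eq_j].
case/(subseq_drop_nth x) => m [/andP[lt_jm lt_m] eq_m].
case/(subseq_drop_nth x) => l [/andP[lt_ml lt_l] eq_l] _.
apply/existsP; exists (Ordinal lt_i); apply/existsP; exists (Ordinal lt_j).
apply/existsP; exists (Ordinal lt_m); apply/existsP; exists (Ordinal lt_l).
by rewrite !(tnth_nth x) /= eq_i eq_j eq_m eq_l lt_ij lt_jm lt_ml neq_xy !eqxx.
Qed.

Section ForestCount.
Variable k : nat.

(* [forest_count m j] = F(m, j): the number of j-tuples of k-quasi-Stirling
   words partitioning an m-letter alphabet. *)
Fixpoint forest_count (m j : nat) {struct m} : nat :=
  let fix count_trees j := match j with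
   | 0 => (m == 0 : nat)
   | j'.+1 => count_trees j' + (if m is m'.+1 then m * forest_count m' (j' + k) else 0)
   end in count_trees j.

Lemma forest_count0 m : forest_count m 0 = (m == 0).
Proof. by case: m. Qed.

Lemma forest_countS m j : forest_count m j.+1 =
  forest_count m j + (if m is m'.+1 then m * forest_count m' (j + k) else 0).
Proof. by case: m. Qed.

Lemma forest_count_nil j : forest_count 0 j = 1.
Proof. by elim: j => [|j IHj]; rewrite ?forest_count0 // forest_countS IHj. Qed.

End ForestCount.

Lemma forest_count_fact k m j : 0 < k -> 0 < m + j ->
  forest_count k m j * ((k - 1) * m + j)`! = j * (k * m + j).-1`!.
Proof.
case: k => // k' _; rewrite subn1 /=.
elim: m j => [|m IHm] j.
  by rewrite forest_count_nil mul1n !muln0; case: j => // j _; rewrite factS.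
elim: j => [_|j IHj _]; first by rewrite forest_count0.
rewrite forest_countS mulnDl -mulnA.
rewrite {2}(_ : k' * m.+1 + j.+1 = k' * m + (j + k'.+1)); last by lia.
rewrite IHm ?addn_gt0 ?orbT // addnS factS mulnCA IHj //.
rewrite (_ : k'.+1 * m + (j + k'.+1) = k'.+1 * m.+1 + j); last by lia.
rewrite [in RHS]addnS.
have : k' * m.+1 + j + m.+1 = k'.+1 * m.+1 + j by lia.
case: (k'.+1 * m.+1 + j) => [|N] eN; first by lia.
rewrite !succnK factS; move: N`! => F; nia.
Qed.

Section Forests.
Variables (T : finType) (k : nat).
Hypothesis k_gt0 : 0 < k.
Implicit Types (a z : T) (S w : seq T) (Bs f g : seq (seq T)).

Definition qs_word w := all (fun z => count_mem z w == k) w && abab_free w.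

Definition qs_forest S j f := [&& size f == j, all qs_word f &
  [forall z, count_mem z (flatten f) == k * (z \in S)]].

Lemma disjoint_blocks_of_counts Bs : all qs_word Bs ->
  (forall z, count_mem z (flatten Bs) <= k) -> disjoint_blocks Bs.
Proof.
elim: Bs => // B Bs IHBs /andP[/andP[/allP cntB _] qBs] cnt /=; apply/andP; split.
  apply/allP => z zB; apply/negP => zBs; have := cnt z.
  have : 0 < count_mem z (flatten Bs) by rewrite -has_count has_pred1.
  by rewrite /= count_cat (eqP (cntB z zB)); lia.
by apply: IHBs qBs _ => z; apply: leq_trans (cnt z); rewrite count_cat leq_addl.
Qed.

Lemma qs_word_interleave a Bs : all qs_word Bs -> a \notin flatten Bs ->
  disjoint_blocks Bs -> size Bs = k -> qs_word (interleave a Bs).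
Proof.
move=> qBs aBs dBs sizeBs; apply/andP; split; last first.
  by apply: abab_free_interleave => //; apply/allP => B /(allP qBs) /andP[].
apply/allP => z /mem_interleave; rewrite inE count_interleave.
case/predU1P=> [->|zBs]; first by rewrite eqxx (count_memPn aBs) sizeBs mul1n addn0.
have [B BBs zB] := flattenP zBs.
have /negbTE-> : a != z by apply: contraNneq aBs => ->.
rewrite (count_flatten_disjoint dBs BBs zB).
by have /andP[/allP/(_ z zB)] := allP qBs B BBs.
Qed.

Lemma qs_word_cons a w : qs_word (a :: w) -> exists Bs,
  [/\ a :: w = interleave a Bs, size Bs = k, a \notin flatten Bs,
      disjoint_blocks Bs & all qs_word Bs].
Proof.
have [B0 [Bs [-> aCs]]] := interleave_decomp a w.
rewrite -interleave_cons; set Cs := B0 :: Bs in aCs *.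
move=> /andP[/allP cnt free].
have aC : a \notin flatten Cs.
  by apply/negP => /flattenP[B /(allP aCs) aB]; apply/negP.
have dCs := disjoint_blocks_of_abab_free free aCs.
have subB B : B \in Cs -> subseq B (interleave a Cs).
  by move=> BCs; apply: subseq_trans (subseq_cons B a) (subseq_cons_interleave a BCs).
exists Cs; split=> //.
  have /eqP := cnt a (mem_head _ _).
  by rewrite count_interleave eqxx (count_memPn aC) mul1n addn0.
apply/allP => B BCs; apply/andP; split; last exact: abab_free_subseq (subB B BCs) free.
apply/allP => z zB; have /eqP := cnt z (mem_subseq (subB B BCs) zB).
have /negbTE neq_az : a != z by apply: contraTneq zB => <-; apply: (allP aCs).
by rewrite count_interleave neq_az mul0n add0n (count_flatten_disjoint dCs BCs zB) => ->.
Qed.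

Definition graft a g := interleave a (take k g) :: drop k g.

Lemma qs_forest0 S f : qs_forest S 0 f -> f = [::] /\ S = [::].
Proof.
case/and3P=> /eqP/size0nil-> _ /forallP cnt; split=> //.
case: S cnt => // a S /(_ a); rewrite mem_head muln1 eq_sym.
by rewrite -(prednK k_gt0).
Qed.

Lemma qs_forest_nil : qs_forest [::] 0 [::].
Proof. by apply/and3P; split=> //; apply/forallP => z; rewrite muln0. Qed.

Lemma qs_forest_nil_cons S j f : qs_forest S j.+1 ([::] :: f) = qs_forest S j f.
Proof. by rewrite /qs_forest /= eqSS /qs_word abab_free_nil. Qed.

Lemma qs_forest_take S a n g : uniq S -> k <= n -> qs_forest (rem a S) n g ->
  a \notin flatten (take k g) /\ size (take k g) = k.
Proof.
move=> uS le_kn /and3P[/eqP sizeg _ /forallP/(_ a)].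
rewrite mem_rem_uniq // inE eqxx muln0 => /eqP/count_memPn ag.
split; last by rewrite size_takel // sizeg.
by apply: contra ag; rewrite -{2}(cat_take_drop k g) flatten_cat mem_cat => ->.
Qed.

Lemma qs_forest_graft S j a g : uniq S -> a \in S ->
  qs_forest (rem a S) (j + k) g -> qs_forest S j.+1 (graft a g).
Proof.
move=> uS aS qg; have [aBs sizeBs] := qs_forest_take uS (leq_addl j k) qg.
move: qg; rewrite -{1}(cat_take_drop k g) /graft.
set Bs := take k g; set f := drop k g.
case/and3P=> /eqP; rewrite size_cat sizeBs addnC => /eqP; rewrite eqn_add2r => /eqP sizef.
rewrite all_cat flatten_cat => /andP[qBs qf] /forallP cnt.
have dBs : disjoint_blocks Bs.
  apply: disjoint_blocks_of_counts qBs _ => z.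
  apply: leq_trans (leq_addr (count_mem z (flatten f)) _) _.
  by rewrite -count_cat (eqP (cnt z)); case: (z \in _); rewrite ?muln1 ?muln0.
apply/and3P; split; first by rewrite /= sizef.
  by rewrite /= qf qs_word_interleave.
apply/forallP => z; rewrite /= count_cat count_interleave -addnA.
move: (cnt z); rewrite count_cat => /eqP->; rewrite sizeBs mem_rem_uniq // inE.
have [<-|_] := eqVneq a z; first by rewrite aS mul1n muln0 addn0 muln1.
by rewrite mul0n add0n.
Qed.

Lemma qs_forest_graft_inv S j a w f : uniq S -> qs_forest S j.+1 ((a :: w) :: f) ->
  exists g, [/\ a \in S, qs_forest (rem a S) (j + k) g & (a :: w) :: f = graft a g].
Proof.
move=> uS /and3P[/eqP[sizef] /andP[qw qf]].
have [Bs [-> sizeBs aBs dBs qBs]] := qs_word_cons qw; move=> /forallP cnt.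
have cnt_z z : (a == z) * k + count_mem z (flatten Bs) + count_mem z (flatten f)
    = k * (z \in S).
  by move/eqP: (cnt z); rewrite /= count_cat count_interleave sizeBs.
have aS : a \in S.
  by apply: contraTT k_gt0 => /negbTE aS; have := cnt_z a; rewrite eqxx aS; lia.
exists (Bs ++ f); split=> //; last by rewrite /graft take_size_cat ?drop_size_cat.
apply/and3P; split; first by rewrite size_cat sizeBs sizef addnC.
  by rewrite all_cat qBs.
apply/forallP => z; rewrite flatten_cat count_cat mem_rem_uniq // inE.
have := cnt_z z; have [<-|_] := eqVneq a z.
  by rewrite aS (count_memPn aBs) /= muln0; lia.
by rewrite mul0n add0n /= => ->.
Qed.

Lemma qs_forestSP S j f : uniq S -> qs_forest S j.+1 f ->
  (exists2 f', f = [::] :: f' & qs_forest S j f') \/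
  (exists a g, [/\ a \in S, qs_forest (rem a S) (j + k) g & f = graft a g]).
Proof.
move=> uS; case: f => [|[|a w] f] qf; first by case/and3P: qf.
  by left; exists f => //; rewrite -qs_forest_nil_cons.
by right; exists a; apply: qs_forest_graft_inv.
Qed.

Lemma graft_inj S n a1 a2 g1 g2 : uniq S -> k <= n ->
  qs_forest (rem a1 S) n g1 -> qs_forest (rem a2 S) n g2 ->
  graft a1 g1 = graft a2 g2 -> a1 = a2 /\ g1 = g2.
Proof.
move=> uS le_kn qg1 qg2 [eqI eqD].
have [a1g1 size1] := qs_forest_take uS le_kn qg1.
have [a2g2 size2] := qs_forest_take uS le_kn qg2.
have ea : a1 = a2.
  move: eqI size1 size2; case: (take k g1) => [_ e|B1 Bs1].
    by move: k_gt0; rewrite -e.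
  by case: (take k g2) => [_ _ e|B2 Bs2 [->]]; first by move: k_gt0; rewrite -e.
subst a2; split=> //.
rewrite -[g1](cat_take_drop k) -[g2](cat_take_drop k) eqD.
by rewrite (interleave_inj a1g1 a2g2 eqI).
Qed.

Lemma graft_neq_nil_cons S n a g f : uniq S -> k <= n ->
  qs_forest (rem a S) n g -> graft a g != [::] :: f.
Proof.
move=> uS le_kn qg; have [_] := qs_forest_take uS le_kn qg.
rewrite /graft; case: (take k g) => [|B Bs] sizeBs //; move: k_gt0; by rewrite -sizeBs.
Qed.

(* The fuel [m] is [size S]; it makes the recursion through [rem a S] structural. *)
Fixpoint forests m S j {struct m} : seq (seq (seq T)) :=
  let fix grow j := match j with
    | 0 => if S is [::] then [:: [::]] else [::]
    | j'.+1 => [seq [::] :: f | f <- grow j'] ++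
        if m is m'.+1 then [seq graft a g | a <- S, g <- forests m' (rem a S) (j' + k)]
        else [::]
    end in grow j.

Lemma forests0 m S : forests m S 0 = if S is [::] then [:: [::]] else [::].
Proof. by case: m. Qed.

Lemma forestsS m S j : forests m S j.+1 = [seq [::] :: f | f <- forests m S j] ++
  if m is m'.+1 then [seq graft a g | a <- S, g <- forests m' (rem a S) (j + k)]
  else [::].
Proof. by case: m. Qed.

Lemma size_forests m S j : size S = m -> size (forests m S j) = forest_count k m j.
Proof.
elim: m S j => [|m IHm] S j sizeS; elim: j => [|j IHj].
- by rewrite forests0 forest_count0 (size0nil sizeS).
- by rewrite forestsS forest_countS /= cats0 addn0 size_map IHj.
- by rewrite forests0 forest_count0; case: S sizeS.
rewrite forestsS forest_countS size_cat size_map IHj size_allpairs_dep sumnE big_map.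
rewrite (eq_big_seq (fun=> forest_count k m (j + k))) => [|a aS]; last first.
  by rewrite IHm // size_rem // sizeS.
by rewrite big_const_seq count_predT iter_addn_0 sizeS mulnC.
Qed.

Lemma mem_forests m S j f : uniq S -> size S = m ->
  (f \in forests m S j) = qs_forest S j f.
Proof.
elim: m S j f => [|m IHm] S j f uS sizeS.
  case: S sizeS uS => // _ uS; elim: j f => [|j IHj] f.
    rewrite forests0 inE; apply/eqP/idP => [->|/qs_forest0[] //]; exact: qs_forest_nil.
  rewrite forestsS cats0; apply/mapP/idP => [[f' f'F ->]|qf].
    by rewrite qs_forest_nil_cons -IHj.
  by case: (qs_forestSP uS qf) => [[f' -> qf']|[a [g []]]] //; exists f'; rewrite ?IHj.
have memR a n g : a \in S -> (g \in forests m (rem a S) n) = qs_forest (rem a S) n g.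
  by move=> aS; rewrite IHm ?rem_uniq // size_rem // sizeS.
elim: j f => [|j IHj] f.
  rewrite forests0; case: S {memR} sizeS uS => // a S' _ _; rewrite in_nil.
  by apply/esym/negP => /qs_forest0[].
rewrite forestsS mem_cat; apply/orP/idP => [[/mapP[f' f'F ->]|]|qf].
- by rewrite qs_forest_nil_cons -IHj.
- case/allpairsPdep=> a [g [aS gF ->]].
  by apply: qs_forest_graft => //; rewrite -memR.
case: (qs_forestSP uS qf) => [[f' -> qf']|[a [g [aS qg ->]]]].
  by left; apply/mapP; exists f'; rewrite ?IHj.
by right; apply/allpairsPdep; exists a, g; rewrite memR.
Qed.

Lemma forests_uniq m S j : uniq S -> size S = m -> uniq (forests m S j).
Proof.
elim: m S j => [|m IHm] S j uS sizeS; elim: j => [|j IHj];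
  rewrite ?forests0 ?forestsS; first by case: S {sizeS uS}.
- by rewrite cats0 map_inj_uniq // => f1 f2 [].
- by case: S {sizeS uS}.
have qsF a g : a \in S ->
    g \in forests m (rem a S) (j + k) -> qs_forest (rem a S) (j + k) g.
  by move=> aS; rewrite mem_forests ?rem_uniq // size_rem // sizeS.
rewrite cat_uniq map_inj_uniq ?IHj //=; last by move=> f1 f2 [].
apply/andP; split.
  apply/hasPn => _ /allpairsPdep[a [g [aS gF ->]]]; apply/mapP => -[f _] /eqP.
  by rewrite (negbTE (graft_neq_nil_cons _ uS (leq_addl j k) (qsF a g aS gF))).
apply: allpairs_uniq_dep => // [a aS|].
  by rewrite IHm ?rem_uniq // size_rem // sizeS.
move=> _ _ /allpairsPdep[a1 [g1 [a1S g1F ->]]] /allpairsPdep[a2 [g2 [a2S g2F ->]]] /=.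
by move/(graft_inj uS (leq_addl j k) (qsF _ _ a1S g1F) (qsF _ _ a2S g2F)) => [-> ->].
Qed.

End Forests.

Lemma size_sum_count_mem (T : finType) (w : seq T) :
  size w = \sum_(z : T) count_mem z w.
Proof.
elim: w => [|a w IHw] /=; first by rewrite big1.
rewrite big_split /= -IHw (bigD1 a) //= eqxx big1 ?addn0 // => z neq_za.
by rewrite eq_sym (negbTE neq_za).
Qed.

Lemma qs_forest_enum1 n k (w : seq 'I_n) :
  qs_forest k (enum 'I_n) 1 [:: w] = is_multiset_perm k w && abab_free w.
Proof.
rewrite /qs_forest /= cats0 andbT /qs_word andbC.
under eq_forallb => z do rewrite mem_enum muln1.
apply/andP/andP => [[cnt /andP[_ free]]|[cnt free]]; first by [].
by split=> //; rewrite free andbT; apply/allP => z _; apply: (forallP cnt).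
Qed.

Lemma card_quasi_stirling n k : 0 < k -> #|quasi_stirling n k| = forest_count k n 1.
Proof.
move=> k_gt0; have uS := enum_uniq 'I_n; have sizeS := size_enum_ord n.
rewrite -(size_forests k 1 sizeS) cardE.
rewrite -(size_map (fun t : (k * n).-tuple 'I_n => [:: val t])); apply: perm_size.
apply: uniq_perm _ (forests_uniq k_gt0 1 uS sizeS) _ => [|f].
  by rewrite map_inj_uniq ?enum_uniq // => t1 t2 [/val_inj].
rewrite mem_forests //; apply/mapP/idP => [[t]|qf].
  by rewrite mem_enum inE has_1212_2121E negbK => mp_free ->; rewrite qs_forest_enum1.
have [w ew] : exists w, f = [:: w].
  by case/and3P: qf; case: f => [|w [|]] // _ _ _; exists w.
move: qf; rewrite ew qs_forest_enum1 => /andP[mp free].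
have size_w : size w == k * n.
  rewrite size_sum_count_mem (eq_bigr (fun=> k)) => [|z _]; last exact/eqP/(forallP mp).
  by rewrite sum_nat_const card_ord mulnC.
by exists (Tuple size_w); rewrite // mem_enum inE has_1212_2121E negbK mp free.
Qed.

Lemma fuss_catalan_dvd n k : 0 < k -> (k - 1) * n + 1 %| 'C(k * n, n).
Proof.
move=> k_gt0; case: n => [|n]; first by rewrite muln0 dvd1n.
have cop : coprime ((k - 1) * n.+1 + 1) n.+1.
  by rewrite coprime_sym /coprime gcdnMDl gcdn1.
rewrite -(Gauss_dvdr _ cop) mul_bin_left.
by rewrite (_ : k * n.+1 - n = (k - 1) * n.+1 + 1) ?dvdn_mulr //; nia.
Qed.

Lemma fuss_catalan_fact n k : 0 < k ->
  ((k - 1) * n + 1)`! * (n`! * Cnk n k) = (k * n)`!.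
Proof.
move=> k_gt0; have := fuss_catalan_dvd n k_gt0; rewrite /Cnk addn1 => /divnK.
move: ('C(k * n, n) %/ _) => c Cc.
rewrite -(bin_fact (leq_pmull n k_gt0)) -Cc factS (_ : k * n - n = (k - 1) * n).
  by move: (_`!) (_`!) => F G; nia.
by rewrite mulnBl mul1n.
Qed.

Theorem theorem4p3 (n k : nat) : (1 <= n)%N -> (1 <= k)%N ->
  #|quasi_stirling n k| = (k * n)`! %/ ((k - 1) * n + 1)`! /\
  #|quasi_stirling n k| = n`! * Cnk n k /\
  (((k - 1) * n + 1) %| 'C(k * n, n))%N /\
  (((k - 1) * n + 1)`! %| (k * n)`!)%N.
Proof.
move=> _ k_gt0.
have card_fact : #|quasi_stirling n k| * ((k - 1) * n + 1)`! = (k * n)`!.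
  by rewrite card_quasi_stirling // forest_count_fact ?addn1 // mul1n.
split; first by rewrite -card_fact mulnK ?fact_gt0.
split.
  apply/eqP; rewrite -(eqn_pmul2l (fact_gt0 ((k - 1) * n + 1))).
  by rewrite mulnC card_fact fuss_catalan_fact.
by split; [apply: fuss_catalan_dvd | rewrite -card_fact dvdn_mull].
Qed.
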